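(* For all integers $v\geq 1$ and $r\geq 1$, $$\sum_{i=1}^{2v-1}2^{i-1}\binom{2r+i-1}{i}\sigma(2v+1-i,2r+i)+2^{2v}\sum_{j=0}^{2r-2}(-1)^j\binom{2v+j}{j}\lambda(2v+1+j)\lambda(2r-j)$$ $$-2^{2v}\binom{2v+2r-1}{2v}(v+r)\lambda(2v+2r+1)+2^{2v}\binom{2v+2r-1}{2v}\sum_{j=1}^{r+v-1}\lambda(2j)\lambda(2r+2v-2j+1)=0.$$
   Context: For integers $t\geq 1$, $n\geq 1$ let $S_n^{(t)}=\sum_{k=1}^{n}\frac{1}{(2k-1)^t}$, and for integers $s\geq 2$, $t\geq 1$ let $\sigma(s,t)=\sum_{n\geq 1}\frac{S_n^{(t)}}{n^s}$. For real $s>1$, $\lambda(s)=\sum_{n\geq 1}\frac{1}{(2n-1)^s}$. *)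

From Stdlib Require Import Reals.
From Coquelicot Require Import Coquelicot.
Open Scope R_scope.

Definition binom (n k : nat) : R := Stdlib.Reals.Binomial.C n k.

Definition Sodd (n t : nat) : R :=
  sum_n_m (fun k : nat => / (INR (2 * k - 1)) ^ t) 1 n.

(* sigma(s,t) = sum_{n>=1} S_n^{(t)} / n^s (0-indexed: n := S n) *)
Definition sigma_st (s t : nat) : R :=
  Series (fun n : nat => Sodd (S n) t / (INR (S n)) ^ s).

(* lambda(s) = sum_{n>=1} 1/(2n-1)^s, written 0-indexed as sum_{n>=0} 1/(2n+1)^s *)
Definition lambda_odd (s : nat) : R :=
  Series (fun n : nat => / (INR (2 * n + 1)) ^ s).

(* For a, b >= 0 put m = 2a+1, m' = 2b+1 and N = m + m' = 2(a+b+1).  The partial fraction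
   decomposition of 1/(N^(2v+1) m'^(2r)) with respect to N and -m' (whose sum is m) writes the
   antisymmetric quantity 1/(N^(2v+1) m'^(2r)) - 1/(N^(2v+1) m^(2r)) as a combination of the
   terms 1/(N^s m^t), 1/(m^s m'^t) and the mixed term m^(-K) (1/m' - 1/N), K = 2v + 2r.
   Summed along the antidiagonals a + b = n the left side vanishes, 1/(N^s m^t) gives
   2^(-s) sigma(s,t) and 1/(m^s m'^t) gives lambda(s) lambda(t).  The mixed double series is
   evaluated by adding the geometric sums of 1/(m^(K+1-i) m'^i), 1 < i < K, over a < b: the
   result splits into two series whose rows telescope to harmonic sums which cancel, leaving
   lambda(K+1), while the added triangular sums pair up as lambda(l) lambda(j) - lambda(l+j). *)

From Stdlib Require Import Reals Lra Lia Arith.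
From Coquelicot Require Import Coquelicot.
Open Scope R_scope.

(* Equalities between Coquelicot sums are stated in [AbelianMonoid.sort R_AbelianMonoid],
   which [ring] and [field] do not recognise as [R]: [R_eq] retypes the goal, and [ring_R]
   moreover turns the sums into real atoms. *)
Ltac R_eq := match goal with |- ?a = ?b => change (@eq R a b) end.

Ltac ring_R :=
  R_eq;
  repeat match goal with |- context [@plus R_AbelianMonoid ?x ?y] =>
    change (@plus R_AbelianMonoid x y) with (Rplus x y) end;
  repeat match goal with |- context [@sum_n_m R_AbelianMonoid ?f ?n ?m] =>
    generalize (@sum_n_m R_AbelianMonoid f n m : R); intro end;
  ring.

(** * Finite sums *)

Lemma sum_n_m_Sm (a : nat -> R) n m :
  (n <= S m)%nat -> sum_n_m a n (S m) = sum_n_m a n m + a (S m).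
Proof. intros; rewrite sum_n_Sm; auto. Qed.

Lemma sum_n_m_Sn (a : nat -> R) n m :
  (n <= m)%nat -> sum_n_m a n m = a n + sum_n_m a (S n) m.
Proof. intros; rewrite sum_Sn_m; auto. Qed.

Lemma sum_n_m_last (a : nat -> R) n m :
  (n <= m)%nat -> (1 <= m)%nat -> sum_n_m a n m = sum_n_m a n (m - 1) + a m.
Proof.
  intros Hnm Hm; destruct m as [|m]; [lia|].
  rewrite sum_n_m_Sm by lia; replace (S m - 1)%nat with m by lia; reflexivity.
Qed.

Lemma sum_n_m_Rmult_l (c : R) (a : nat -> R) n m :
  sum_n_m (fun k => c * a k) n m = c * sum_n_m a n m.
Proof. apply (sum_n_m_mult_l c a n m). Qed.

Lemma sum_n_m_Rplus (a b : nat -> R) n m :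
  sum_n_m (fun k => a k + b k) n m = sum_n_m a n m + sum_n_m b n m.
Proof. apply (sum_n_m_plus a b n m). Qed.

Lemma sum_n_m_Rminus (a b : nat -> R) n m :
  sum_n_m (fun k => a k - b k) n m = sum_n_m a n m - sum_n_m b n m.
Proof.
  rewrite (sum_n_m_ext _ (fun k => a k + (-1) * b k)) by (intro; ring_R).
  rewrite sum_n_m_Rplus, sum_n_m_Rmult_l; ring_R.
Qed.

Lemma sum_n_m_eq0 (a : nat -> R) n m :
  (forall k, (n <= k <= m)%nat -> a k = 0) -> sum_n_m a n m = 0.
Proof.
  intros H; rewrite (sum_n_m_ext_loc a (fun _ => 0)) by auto.
  rewrite sum_n_m_const; ring_R.
Qed.

Lemma sum_n_m_nonneg (a : nat -> R) n m :
  (forall k, 0 <= a k) -> 0 <= sum_n_m a n m.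
Proof.
  intros H; destruct (le_lt_dec n m) as [Hnm|Hnm].
  - induction Hnm.
    + rewrite sum_n_n; auto.
    + rewrite sum_n_m_Sm by lia; specialize (H (S m)); lra.
  - rewrite sum_n_m_zero by lia; apply Rle_refl.
Qed.

Lemma sum_n_m_le_loc (a b : nat -> R) n m :
  (forall k, (n <= k <= m)%nat -> a k <= b k) -> sum_n_m a n m <= sum_n_m b n m.
Proof.
  intros H; destruct (le_lt_dec n m) as [Hnm|Hnm].
  - induction Hnm.
    + rewrite !sum_n_n; apply H; lia.
    + rewrite !sum_n_m_Sm by lia.
      apply Rplus_le_compat; [apply IHHnm; intros; apply H|apply H]; lia.
  - rewrite !sum_n_m_zero by lia; apply Rle_refl.
Qed.

Lemma sum_n_m_le_upto (a : nat -> R) n m :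
  (forall k, 0 <= a k) -> (n <= m)%nat -> sum_n_m a 0 n <= sum_n_m a 0 m.
Proof.
  intros H Hnm; induction Hnm; [lra|].
  rewrite sum_n_m_Sm by lia; specialize (H (S m)); lra.
Qed.

Lemma sum_n_m_shift c (a : nat -> R) n m :
  sum_n_m (fun k => a (k + c)%nat) n m = sum_n_m a (n + c) (m + c).
Proof.
  revert a n m; induction c; intros a n m.
  - rewrite !Nat.add_0_r; apply sum_n_m_ext; intro; rewrite Nat.add_0_r; reflexivity.
  - rewrite (sum_n_m_ext _ (fun k => a (S (k + c)))) by (intro; f_equal; lia).
    rewrite (IHc (fun j => a (S j))), sum_n_m_S; f_equal; lia.
Qed.

Lemma sum_n_m_rev (a : nat -> R) n :
  sum_n_m a 0 n = sum_n_m (fun i => a (n - i)%nat) 0 n.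
Proof.
  induction n.
  - rewrite !sum_n_n; reflexivity.
  - rewrite sum_n_m_Sm, (sum_n_m_Sn _ 0 (S n)) by lia.
    rewrite <- sum_n_m_S, Nat.sub_0_r, IHn.
    change (sum_n_m (fun k => a (S n - S k)%nat) 0 n)
      with (sum_n_m (fun i => a (n - i)%nat) 0 n).
    ring_R.
Qed.

Lemma sum_n_m_swap (F : nat -> nat -> R) n p q :
  sum_n_m (fun i => sum_n_m (F i) 0 n) p q
  = sum_n_m (fun k => sum_n_m (fun i => F i k) p q) 0 n.
Proof.
  destruct (le_lt_dec p q) as [Hpq|Hpq].
  - induction Hpq.
    + rewrite sum_n_n; apply sum_n_m_ext; intro; rewrite sum_n_n; reflexivity.
    + rewrite sum_n_m_Sm, IHHpq by lia.
      rewrite <- sum_n_m_Rplus; apply sum_n_m_ext; intro.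
      rewrite sum_n_m_Sm by lia; reflexivity.
  - rewrite sum_n_m_zero by lia; symmetry.
    apply sum_n_m_eq0; intros; rewrite sum_n_m_zero by lia; reflexivity.
Qed.

Lemma sum_n_m_pairs (a : nat -> R) k :
  (1 <= k)%nat ->
  sum_n_m a 2 (2 * k - 1) = sum_n_m (fun j => a (2 * j)%nat + a (2 * j + 1)%nat) 1 (k - 1).
Proof.
  intros Hk; induction Hk.
  - rewrite !sum_n_m_zero by lia; reflexivity.
  - replace (2 * S m - 1)%nat with (S (S (2 * m - 1))) by lia.
    replace (S m - 1)%nat with (S (m - 1)) by lia.
    rewrite !sum_n_m_Sm, IHHk by lia.
    replace (S (m - 1)) with m by lia.
    replace (S (2 * m - 1)) with (2 * m)%nat by lia.
    replace (S (2 * m)) with (2 * m + 1)%nat by lia.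
    ring_R.
Qed.

Lemma sum_n_m_rev_1 (a : nat -> R) k :
  sum_n_m a 1 (k - 1) = sum_n_m (fun j => a (k - j)%nat) 1 (k - 1).
Proof.
  destruct k as [|[|k]]; [rewrite !sum_n_m_zero by lia; reflexivity ..|].
  replace (S (S k) - 1)%nat with (S k) by lia.
  rewrite <- !sum_n_m_S, sum_n_m_rev.
  apply sum_n_m_ext_loc; intros; f_equal; lia.
Qed.

(** * Partial fractions *)

Lemma geometric_partial_sum (t : R) Q :
  t ^ S Q + (1 - t) * sum_n_m (fun j => t ^ j) 0 Q = 1.
Proof.
  induction Q.
  - rewrite sum_n_n; simpl; ring.
  - rewrite sum_n_m_Sm by lia; simpl in *; nra.
Qed.

Lemma sum_binom_pow_step P (t : R) Q :
  sum_n_m (fun j => Binomial.C (P + 1 + j) j * t ^ j) 0 Q * (1 - t)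
  - sum_n_m (fun j => Binomial.C (P + j) j * t ^ j) 0 Q
  = - Binomial.C (P + 1 + Q) Q * t ^ S Q.
Proof.
  induction Q.
  - rewrite !sum_n_n, !C_n_0; simpl; ring.
  - rewrite !sum_n_m_Sm by lia.
    replace (P + S Q)%nat with (P + 1 + Q)%nat by lia.
    replace (P + 1 + S Q)%nat with (S (P + 1 + Q)) by lia.
    rewrite <- pascal by lia.
    simpl in *; nra.
Qed.

(* For a coin showing heads with probability [u] and tails with probability [t],
   the two terms are the probabilities that [Q + 1] tails come before [P + 1]
   heads, and conversely. *)
Lemma binom_pow_partition P Q (u t : R) :
  u + t = 1 ->
  t ^ S Q * sum_n_m (fun i => Binomial.C (Q + i) i * u ^ i) 0 P
  + u ^ S P * sum_n_m (fun j => Binomial.C (P + j) j * t ^ j) 0 Q = 1.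
Proof.
  intros Hut; replace u with (1 - t) by lra; clear u Hut.
  induction P.
  - rewrite sum_n_n, C_n_0, (sum_n_m_ext _ (fun j => t ^ j))
      by (intro; rewrite Nat.add_0_l, C_n_n; ring_R).
    pose proof (geometric_partial_sum t Q); rewrite pow_O, pow_1; lra.
  - rewrite sum_n_m_Sm by lia.
    rewrite (pascal_step1 (Q + S P) (S P)) by lia.
    replace (Q + S P - S P)%nat with Q by lia.
    replace (Q + S P)%nat with (P + 1 + Q)%nat by lia.
    rewrite (sum_n_m_ext (fun j => Binomial.C (S P + j) j * t ^ j)
               (fun j => Binomial.C (P + 1 + j) j * t ^ j))
      by (intro; do 3 f_equal; lia).
    pose proof (sum_binom_pow_step P t Q) as Hstep.
    revert IHP Hstep; simpl.
    generalize (sum_n_m (fun j => Binomial.C (P + 1 + j) j * t ^ j) 0 Q : R).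
    generalize (sum_n_m (fun j => Binomial.C (P + j) j * t ^ j) 0 Q : R).
    generalize (sum_n_m (fun i => Binomial.C (Q + i) i * (1 - t) ^ i) 0 P : R).
    intros; nra.
Qed.

Lemma pow_split (x : R) k n : (k <= n)%nat -> x ^ n = x ^ k * x ^ (n - k).
Proof. intros; rewrite <- pow_add; f_equal; lia. Qed.

Lemma inv_pow_mul_ratio (x s : R) P Q i :
  x <> 0 -> s <> 0 -> (i <= P)%nat ->
  / (x ^ (S P - i) * s ^ (S Q + i)) = / s ^ (S P + S Q) * ((x / s) ^ i / (x / s) ^ S P).
Proof.
  intros Hx Hs Hi.
  unfold Rdiv; rewrite !Rpow_mult_distr, !pow_inv, !pow_add.
  rewrite (pow_split x i (S P)), (pow_split s i (S P)) by lia.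
  assert (x ^ i <> 0) by (apply pow_nonzero; auto).
  assert (x ^ (S P - i) <> 0) by (apply pow_nonzero; auto).
  assert (s ^ i <> 0) by (apply pow_nonzero; auto).
  assert (s ^ (S P - i) <> 0) by (apply pow_nonzero; auto).
  assert (s ^ S Q <> 0) by (apply pow_nonzero; auto).
  field; auto.
Qed.

Lemma partial_fraction_pow (x y : R) P Q :
  x <> 0 -> y <> 0 -> x + y <> 0 ->
  / (x ^ S P * y ^ S Q) =
  sum_n_m (fun i => Binomial.C (Q + i) i * / (x ^ (S P - i) * (x + y) ^ (S Q + i))) 0 P
  + sum_n_m (fun j => Binomial.C (P + j) j * / (y ^ (S Q - j) * (x + y) ^ (S P + j))) 0 Q.
Proof.
  intros Hx Hy Hs; set (s := x + y) in *.
  set (u := x / s); set (t := y / s).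
  rewrite (sum_n_m_ext_loc _ (fun i => / s ^ (S P + S Q) * / u ^ S P
                                       * (Binomial.C (Q + i) i * u ^ i)))
    by (intros; rewrite inv_pow_mul_ratio by (auto; lia); unfold u, Rdiv; ring_R).
  rewrite (sum_n_m_ext_loc (fun j => _ * / (y ^ (S Q - j) * s ^ (S P + j)))
             (fun j => / s ^ (S P + S Q) * / t ^ S Q * (Binomial.C (P + j) j * t ^ j)))
    by (intros; rewrite inv_pow_mul_ratio by (auto; lia);
        replace (S Q + S P)%nat with (S P + S Q)%nat by lia; unfold t, Rdiv; ring_R).
  rewrite !sum_n_m_Rmult_l.
  assert (Hut : u + t = 1) by (unfold u, t, s in *; field; auto).
  pose proof (binom_pow_partition P Q u t Hut) as Hpart.
  assert (Hu : u <> 0) by (unfold u, Rdiv; apply Rmult_integral_contrapositive_currified;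
                           auto; apply Rinv_neq_0_compat; auto).
  assert (Ht : t <> 0) by (unfold t, Rdiv; apply Rmult_integral_contrapositive_currified;
                           auto; apply Rinv_neq_0_compat; auto).
  assert (u ^ S P <> 0) by (apply pow_nonzero; auto).
  assert (t ^ S Q <> 0) by (apply pow_nonzero; auto).
  transitivity (/ s ^ (S P + S Q) * / (u ^ S P * t ^ S Q)
    * (t ^ S Q * sum_n_m (fun i => Binomial.C (Q + i) i * u ^ i) 0 P
       + u ^ S P * sum_n_m (fun j => Binomial.C (P + j) j * t ^ j) 0 Q)).
  - rewrite Hpart; unfold u, t, Rdiv.
    rewrite !Rpow_mult_distr, !pow_inv, pow_add.
    assert (x ^ S P <> 0) by (apply pow_nonzero; auto).
    assert (y ^ S Q <> 0) by (apply pow_nonzero; auto).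
    assert (s ^ S P <> 0) by (apply pow_nonzero; auto).
    assert (s ^ S Q <> 0) by (apply pow_nonzero; auto).
    field; auto.
  - field; repeat split; try apply pow_nonzero; auto.
Qed.

(** * Series and summation by antidiagonals *)

Lemma is_series_scal_Rmult (c : R) (a : nat -> R) l :
  is_series a l -> is_series (fun n => c * a n) (c * l).
Proof. apply (is_series_scal_l c a l). Qed.

Lemma is_series_Rplus (a b : nat -> R) la lb :
  is_series a la -> is_series b lb -> is_series (fun n => a n + b n) (la + lb).
Proof. apply (is_series_plus a b la lb). Qed.

Lemma is_series_Rminus (a b : nat -> R) la lb :
  is_series a la -> is_series b lb -> is_series (fun n => a n - b n) (la - lb).
Proof. apply (is_series_minus a b la lb). Qed.

Lemma is_series_eq (a : nat -> R) l l' : is_series a l -> is_series a l' -> l = l'.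
Proof. intros H H'; rewrite <- (is_series_unique _ _ H); apply is_series_unique, H'. Qed.

Lemma is_series_iff_lim (a : nat -> R) l :
  is_series a l <-> is_lim_seq (fun n => sum_n_m a 0 n) l.
Proof. split; intro H; exact H. Qed.

Lemma is_series_partial_le (a : nat -> R) l n :
  (forall k, 0 <= a k) -> is_series a l -> sum_n_m a 0 n <= l.
Proof.
  intros Ha Hl; apply (growing_ineq (fun n => sum_n_m a 0 n)).
  - intro k; rewrite sum_n_m_Sm by lia; specialize (Ha (S k)); lra.
  - apply is_lim_seq_Reals, Hl.
Qed.

Lemma is_series_nonneg (a : nat -> R) l : (forall k, 0 <= a k) -> is_series a l -> 0 <= l.
Proof.
  intros Ha Hl; pose proof (is_series_partial_le a l 0 Ha Hl) as H0.
  rewrite sum_n_n in H0; specialize (Ha 0%nat); lra.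
Qed.

Lemma is_series_finite_support (a : nat -> R) N :
  (forall k, (N < k)%nat -> a k = 0) -> is_series a (sum_n_m a 0 N).
Proof.
  intros Ha; apply is_series_iff_lim, (is_lim_seq_ext_loc (fun _ => sum_n_m a 0 N));
    [|apply is_lim_seq_const].
  exists N; intros n Hn; rewrite (sum_n_m_Chasles a 0 N n) by lia.
  rewrite (sum_n_m_eq0 a (S N) n) by (intros; apply Ha; lia); ring_R.
Qed.

Lemma is_series_R0 : is_series (fun _ => 0) 0.
Proof.
  pose proof (is_series_finite_support (fun _ => 0) 0 (fun _ _ => eq_refl)) as H.
  rewrite sum_n_n in H; exact H.
Qed.

Lemma is_series_sum_n_m (F : nat -> nat -> R) (l : nat -> R) p q :
  (forall i, (p <= i <= q)%nat -> is_series (F i) (l i)) ->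
  is_series (fun k => sum_n_m (fun i => F i k) p q) (sum_n_m l p q).
Proof.
  intros H; destruct (le_lt_dec p q) as [Hpq|Hpq].
  - induction Hpq.
    + rewrite sum_n_n; apply (is_series_ext (F p)); [intro; rewrite sum_n_n; reflexivity|].
      apply H; lia.
    + rewrite sum_n_m_Sm by lia.
      apply (is_series_ext (fun k => sum_n_m (fun i => F i k) p m + F (S m) k)).
      { intro; rewrite sum_n_m_Sm by lia; reflexivity. }
      apply is_series_Rplus; [apply IHHpq; intros; apply H|apply H]; lia.
  - rewrite sum_n_m_zero by lia.
    apply (is_series_ext (fun _ => 0)); [intro; rewrite sum_n_m_zero by lia; reflexivity|].
    apply is_series_R0.
Qed.

Definition antidiag (f : nat -> nat -> R) (n : nat) : R :=
  sum_n_m (fun a => f a (n - a)%nat) 0 n.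

Lemma sum_antidiag (f : nat -> nat -> R) M :
  sum_n_m (antidiag f) 0 M = sum_n_m (fun a => sum_n_m (f a) 0 (M - a)) 0 M.
Proof.
  induction M.
  - unfold antidiag; rewrite !sum_n_n; reflexivity.
  - rewrite sum_n_m_Sm, IHM by lia; unfold antidiag.
    rewrite !(sum_n_m_Sm _ 0 M) by lia.
    rewrite Nat.sub_diag, sum_n_n.
    rewrite (sum_n_m_ext_loc (fun a => sum_n_m (f a) 0 (S M - a))
               (fun a => sum_n_m (f a) 0 (M - a) + f a (S M - a)%nat)).
    + rewrite sum_n_m_Rplus; ring_R.
    + intros a Ha; replace (S M - a)%nat with (S (M - a)) by lia.
      rewrite sum_n_m_Sm by lia; reflexivity.
Qed.

Lemma antidiag_swap (f : nat -> nat -> R) n :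
  antidiag f n = antidiag (fun b a => f a b) n.
Proof. unfold antidiag; rewrite sum_n_m_rev; apply sum_n_m_ext_loc; intros; f_equal; lia. Qed.

Section NonnegativeDoubleSeries.

Variables (f : nat -> nat -> R) (r : nat -> R) (l : R).
Hypothesis f_nonneg : forall a b, 0 <= f a b.
Hypothesis rows : forall a, is_series (f a) (r a).
Hypothesis total : is_series r l.

Lemma sum_antidiag_le_total M : sum_n_m (antidiag f) 0 M <= l.
Proof.
  assert (r_nonneg : forall a, 0 <= r a) by (intro a; apply (is_series_nonneg (f a)); auto).
  rewrite sum_antidiag; apply Rle_trans with (sum_n_m r 0 M).
  - apply sum_n_m_le_loc; intros a _; apply is_series_partial_le; auto.
  - apply is_series_partial_le; auto.
Qed.

Lemma sum_rectangle_le_antidiag A M :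
  sum_n_m (fun b => sum_n_m (fun a => f a b) 0 A) 0 M <= sum_n_m (antidiag f) 0 (M + A).
Proof.
  rewrite sum_antidiag, <- sum_n_m_swap.
  apply Rle_trans with (sum_n_m (fun a => sum_n_m (f a) 0 (M + A - a)) 0 A).
  - apply sum_n_m_le_loc; intros a Ha; apply sum_n_m_le_upto; auto; lia.
  - apply sum_n_m_le_upto; [intro; apply sum_n_m_nonneg; auto | lia].
Qed.

(* Tonelli for the summation by antidiagonals: the partial sums increase and are
   squeezed between the rectangles [a <= A, b <= M] and the total [l]. *)
Lemma is_series_antidiag : is_series (antidiag f) l.
Proof.
  set (T := fun M => sum_n_m (antidiag f) 0 M).
  assert (T_incr : Un_growing T).
  { intro M; unfold T; rewrite sum_n_m_Sm by lia.
    assert (0 <= antidiag f (S M)) by (apply sum_n_m_nonneg; auto).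
    lra. }
  destruct (growing_cv T T_incr) as [L HL].
  { exists l; intros x [M ->]; apply sum_antidiag_le_total. }
  apply is_lim_seq_Reals in HL.
  replace l with L; [exact HL|].
  apply Rle_antisym.
  - apply (is_lim_seq_le T (fun _ => l) L l); auto using sum_antidiag_le_total, is_lim_seq_const.
  - apply (is_lim_seq_le (fun A => sum_n_m r 0 A) (fun _ => L) l L); auto using is_lim_seq_const.
    intro A.
    apply (is_lim_seq_le (fun M => sum_n_m (fun b => sum_n_m (fun a => f a b) 0 A) 0 M)
             (fun M => T (M + A)%nat) (sum_n_m r 0 A) L); auto using sum_rectangle_le_antidiag.
    + apply (is_series_sum_n_m (fun a b => f a b)); auto.
    + apply (is_lim_seq_incr_n T A L), HL.
Qed.

End NonnegativeDoubleSeries.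

(** * Reciprocals of odd numbers *)

Lemma INR_S_pos n : 0 < INR (S n).
Proof. apply lt_0_INR; lia. Qed.

Lemma is_lim_seq_inv_INR_S : is_lim_seq (fun n => / INR (S n)) 0.
Proof.
  assert (H : is_lim_seq (fun n => INR (S n)) p_infty)
    by apply (is_lim_seq_incr_1 INR p_infty), is_lim_seq_INR.
  apply (is_lim_seq_inv _ _ H); discriminate.
Qed.

Lemma ex_series_le_nonneg (a b : nat -> R) :
  (forall n, 0 <= a n <= b n) -> ex_series b -> ex_series a.
Proof.
  intros H; apply (ex_series_le a b); intro n.
  change norm with Rabs; rewrite Rabs_pos_eq; apply H.
Qed.

Lemma ex_series_inv_sq : ex_series (fun n => / INR (S n) ^ 2).
Proof.
  apply (ex_series_le_nonneg _ (fun n => 2 * (/ INR (S n) - / INR (S (S n))))).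
  - intro n; rewrite (S_INR (S n)), S_INR; pose proof (pos_INR n).
    set (x := INR n + 1); assert (1 <= x) by (unfold x; lra).
    replace (2 * (/ x - / (x + 1))) with (/ (x * (x + 1) / 2)) by (field; lra).
    split; [left; apply Rinv_0_lt_compat, pow_lt; lra|].
    apply Rinv_le_contravar; [apply Rdiv_lt_0_compat|simpl]; nra.
  - exists (2 * 1); apply is_series_scal_Rmult, is_series_iff_lim.
    apply (is_lim_seq_ext (fun n => 1 - / INR (S (S n)))).
    + intro n; induction n.
      * rewrite sum_n_n; simpl; field; lra.
      * rewrite sum_n_m_Sm, <- IHn by lia; ring.
    + replace (Finite 1) with (Rbar_minus 1 0) by (simpl; f_equal; ring).
      apply is_lim_seq_minus'; [apply is_lim_seq_const|].
      apply (is_lim_seq_incr_1 (fun n => / INR (S n))), is_lim_seq_inv_INR_S.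
Qed.

Lemma ex_series_le_inv_sq (a : nat -> R) (C : R) :
  (forall n, 0 <= a n <= C * / INR (S n) ^ 2) -> ex_series a.
Proof.
  intros H; apply (ex_series_le_nonneg _ _ H).
  apply (ex_series_ext (fun n => / INR (S n) ^ 2 * C)); [intro; apply Rmult_comm|].
  apply ex_series_scal_r, ex_series_inv_sq.
Qed.

Lemma inv_pow_le_inv_sq (x : R) n s :
  INR (S n) <= x -> (2 <= s)%nat -> 0 <= / x ^ s <= / INR (S n) ^ 2.
Proof.
  intros Hx Hs; pose proof (INR_S_pos n).
  assert (1 <= INR (S n)) by (rewrite S_INR; pose proof (pos_INR n); lra).
  split; [left; apply Rinv_0_lt_compat, pow_lt; lra|].
  apply Rinv_le_contravar; [apply pow_lt; lra|].
  apply Rle_trans with (x ^ 2); [apply pow_incr; lra|apply Rle_pow; [lra|lia]].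
Qed.

Definition oddR (a : nat) : R := INR (2 * a + 1).

Lemma oddR_ge_S a : INR (S a) <= oddR a.
Proof. apply le_INR; lia. Qed.

Lemma oddR_ge_1 a : 1 <= oddR a.
Proof. apply (le_INR 1); lia. Qed.

Lemma oddR_pos a : 0 < oddR a.
Proof. pose proof (oddR_ge_1 a); lra. Qed.

Lemma inv_oddR_pow_pos a l : 0 < / oddR a ^ l.
Proof. apply Rinv_0_lt_compat, pow_lt, oddR_pos. Qed.

Lemma is_series_lambda_odd s :
  (2 <= s)%nat -> is_series (fun n => / oddR n ^ s) (lambda_odd s).
Proof.
  intros Hs; apply Series_correct, (ex_series_le_inv_sq _ 1); intro n.
  rewrite Rmult_1_l; apply inv_pow_le_inv_sq; auto using oddR_ge_S.
Qed.

Definition harm_even (n : nat) : R := sum_n_m (fun e => / INR (2 * e)) 1 n.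
Definition harm_odd (n : nat) : R := sum_n_m (fun b => / oddR b) 0 n.

Lemma harm_even_0 : harm_even 0 = 0.
Proof. unfold harm_even; rewrite sum_n_m_zero by lia; reflexivity. Qed.

Lemma harm_even_nonneg n : 0 <= harm_even n.
Proof.
  apply sum_n_m_nonneg; intros [|e]; [simpl; rewrite Rinv_0; lra|].
  left; apply Rinv_0_lt_compat; replace (2 * S e)%nat with (S (2 * e + 1)) by lia.
  apply INR_S_pos.
Qed.

Lemma harm_even_le n : harm_even n <= INR n.
Proof.
  induction n; [rewrite harm_even_0; simpl; lra|].
  unfold harm_even in *; rewrite sum_n_m_Sm, S_INR by lia.
  assert (/ INR (2 * S n) <= 1); [|lra].
  rewrite <- Rinv_1; apply Rinv_le_contravar; [lra|apply (le_INR 1); lia].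
Qed.

Lemma harm_odd_le n : harm_odd n <= INR (S n).
Proof.
  induction n; unfold harm_odd in *.
  - rewrite sum_n_n; unfold oddR; simpl; lra.
  - rewrite sum_n_m_Sm, (S_INR (S n)) by lia.
    assert (/ oddR (S n) <= 1); [|lra].
    rewrite <- Rinv_1; apply Rinv_le_contravar; [lra|apply oddR_ge_1].
Qed.

Lemma inv_oddR_le_harm_odd n : / oddR n <= harm_odd n.
Proof.
  destruct n; unfold harm_odd; [rewrite sum_n_n; lra|].
  rewrite sum_n_m_Sm by lia.
  assert (0 <= sum_n_m (fun b => / oddR b) 0 n); [|lra].
  apply sum_n_m_nonneg; intro; left; apply Rinv_0_lt_compat, oddR_pos.
Qed.

Lemma harm_le_oddR n : harm_odd n + harm_even n <= oddR n.
Proof.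
  pose proof (harm_odd_le n); pose proof (harm_even_le n).
  unfold oddR; rewrite plus_INR, mult_INR, S_INR in *; simpl; lra.
Qed.

Lemma harm_even_window a :
  sum_n_m (fun b => / INR (2 * a + 2 * b + 2)) 0 a = harm_even (2 * a + 1) - harm_even a.
Proof.
  transitivity (sum_n_m (fun e => / INR (2 * e)) (0 + (a + 1)) (a + (a + 1))).
  { rewrite <- sum_n_m_shift; apply sum_n_m_ext; intro; do 2 f_equal; lia. }
  unfold harm_even; rewrite (sum_n_m_Chasles _ 1 a (2 * a + 1)) by lia.
  replace (0 + (a + 1))%nat with (S a) by lia.
  replace (a + (a + 1))%nat with (2 * a + 1)%nat by lia.
  ring_R.
Qed.

Lemma harm_even_tail_lim k : is_lim_seq (fun c => harm_even (k + c) - harm_even c) 0.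
Proof.
  apply is_lim_seq_le_le with (fun _ => 0) (fun c => INR k * / INR (S c));
    [|apply is_lim_seq_const|].
  - intro c; unfold harm_even; rewrite (sum_n_m_Chasles _ 1 c (k + c)) by lia.
    replace (plus _ _ - _) with (sum_n_m (fun e => / INR (2 * e)) (S c) (k + c)) by ring_R.
    split.
    + apply sum_n_m_nonneg; intros [|e]; [simpl; rewrite Rinv_0; lra|].
      left; apply Rinv_0_lt_compat; apply (lt_0_INR (2 * S e)); lia.
    + apply Rle_trans with (sum_n_m (fun _ => / INR (S c)) (S c) (k + c)).
      * apply sum_n_m_le_loc; intros e He.
        apply Rinv_le_contravar; [apply INR_S_pos|apply le_INR; lia].
      * rewrite sum_n_m_const; replace (S (k + c) - S c)%nat with k by lia; lra.
  - replace (Finite 0) with (Rbar_mult (INR k) 0) by (simpl; f_equal; ring).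
    apply is_lim_seq_scal_l, is_lim_seq_inv_INR_S.
Qed.

(* For [b > a] the weight [1 / (2 (b - a))] is [1 / (oddR b - oddR a)]: it is what
   the geometric sums of the main argument produce. *)
Definition row_kernel (a b : nat) : R :=
  if (a <? b)%nat then / INR (2 * (b - a)) - / INR (2 * a + 2 * b + 2)
  else / oddR b - / INR (2 * a + 2 * b + 2).

Lemma row_kernel_nonneg a b : 0 <= row_kernel a b.
Proof.
  unfold row_kernel; destruct (Nat.ltb_spec a b).
  - assert (Hpos : 0 < INR (2 * (b - a))) by (apply lt_0_INR; lia).
    assert (Hle : INR (2 * (b - a)) <= INR (2 * a + 2 * b + 2)) by (apply le_INR; lia).
    pose proof (Rinv_le_contravar _ _ Hpos Hle); lra.
  - assert (Hle : oddR b <= INR (2 * a + 2 * b + 2)) by (apply le_INR; lia).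
    pose proof (Rinv_le_contravar _ _ (oddR_pos b) Hle); lra.
Qed.

Lemma sum_row_kernel a c :
  sum_n_m (row_kernel a) 0 (a + c)
  = harm_odd a + harm_even a - (harm_even (2 * a + 1 + c) - harm_even c).
Proof.
  induction c.
  - rewrite !Nat.add_0_r, harm_even_0.
    rewrite (sum_n_m_ext_loc _ (fun b => / oddR b - / INR (2 * a + 2 * b + 2))).
    + rewrite sum_n_m_Rminus, harm_even_window; unfold harm_odd; ring_R.
    + intros b Hb; unfold row_kernel; destruct (Nat.ltb_spec a b); [lia|reflexivity].
  - replace (a + S c)%nat with (S (a + c)) by lia.
    replace (2 * a + 1 + S c)%nat with (S (2 * a + 1 + c)) by lia.
    rewrite sum_n_m_Sm, IHc by lia; unfold row_kernel, harm_even.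
    destruct (Nat.ltb_spec a (S (a + c))); [|lia].
    rewrite !sum_n_m_Sm by lia.
    replace (S (a + c) - a)%nat with (S c) by lia.
    replace (2 * S (2 * a + 1 + c))%nat with (2 * a + 2 * S (a + c) + 2)%nat by lia.
    ring_R.
Qed.

Lemma is_series_row_kernel a : is_series (row_kernel a) (harm_odd a + harm_even a).
Proof.
  apply is_series_iff_lim, (is_lim_seq_incr_n _ a).
  apply (is_lim_seq_ext
           (fun c => harm_odd a + harm_even a - (harm_even (2 * a + 1 + c) - harm_even c))).
  { intro c; rewrite (Nat.add_comm c a), sum_row_kernel; reflexivity. }
  replace (Finite (harm_odd a + harm_even a))
    with (Rbar_minus (harm_odd a + harm_even a) 0) by (simpl; f_equal; ring).
  apply is_lim_seq_minus'; [apply is_lim_seq_const|apply harm_even_tail_lim].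
Qed.

Definition lambda_prod_term (l j a b : nat) : R := / oddR a ^ l * / oddR b ^ j.
Definition lambda_lt_term (l j a b : nat) : R :=
  if (a <? b)%nat then lambda_prod_term l j a b else 0.
Definition lambda_eq_term (l j a b : nat) : R :=
  if (a =? b)%nat then lambda_prod_term l j a b else 0.

Definition lambda_lt (l j : nat) : R := Series (antidiag (lambda_lt_term l j)).

Lemma lambda_prod_term_nonneg l j a b : 0 <= lambda_prod_term l j a b.
Proof.
  unfold lambda_prod_term; pose proof (inv_oddR_pow_pos a l); pose proof (inv_oddR_pow_pos b j).
  nra.
Qed.

Lemma is_series_lambda_prod l j :
  (2 <= l)%nat -> (2 <= j)%nat ->
  is_series (antidiag (lambda_prod_term l j)) (lambda_odd l * lambda_odd j).
Proof.
  intros Hl Hj; apply (is_series_antidiag _ (fun a => / oddR a ^ l * lambda_odd j)).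
  - apply lambda_prod_term_nonneg.
  - intro a; apply is_series_scal_Rmult, is_series_lambda_odd, Hj.
  - apply is_series_scal_r, is_series_lambda_odd, Hl.
Qed.

Lemma is_series_lambda_lt l j :
  (2 <= l)%nat -> (2 <= j)%nat -> is_series (antidiag (lambda_lt_term l j)) (lambda_lt l j).
Proof.
  intros Hl Hj; apply Series_correct.
  apply (ex_series_le_nonneg _ (antidiag (lambda_prod_term l j))).
  - intro n; split; [apply sum_n_m_nonneg|apply sum_n_m_le_loc]; intros;
      unfold lambda_lt_term; destruct (_ <? _)%nat; auto using Rle_refl, lambda_prod_term_nonneg.
  - eexists; apply is_series_lambda_prod; auto.
Qed.

Lemma is_series_lambda_eq l j :
  (2 <= l + j)%nat -> is_series (antidiag (lambda_eq_term l j)) (lambda_odd (l + j)).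
Proof.
  intros Hlj; apply (is_series_antidiag _ (fun a => / oddR a ^ (l + j))).
  - intros a b; unfold lambda_eq_term; destruct (a =? b)%nat;
      [apply lambda_prod_term_nonneg|lra].
  - intro a; replace (/ oddR a ^ (l + j)) with (sum_n_m (lambda_eq_term l j a) 0 a).
    + apply is_series_finite_support; intros k Hk.
      unfold lambda_eq_term; destruct (Nat.eqb_spec a k); [lia|reflexivity].
    + assert (Hdiag : lambda_eq_term l j a a = / oddR a ^ (l + j))
        by (unfold lambda_eq_term, lambda_prod_term;
            rewrite Nat.eqb_refl, pow_add, Rinv_mult; reflexivity).
      destruct a as [|a]; [rewrite sum_n_n; exact Hdiag|].
      rewrite sum_n_m_Sm, Hdiag by lia.
      rewrite sum_n_m_eq0; [ring_R|].
      intros k Hk; unfold lambda_eq_term; destruct (Nat.eqb_spec (S a) k); [lia|reflexivity].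
  - apply is_series_lambda_odd, Hlj.
Qed.

(* Splitting the product of two series according to [a < b], [b < a], [a = b]. *)
Lemma lambda_lt_add_swap l j :
  (2 <= l)%nat -> (2 <= j)%nat ->
  lambda_lt l j + lambda_lt j l = lambda_odd l * lambda_odd j - lambda_odd (l + j).
Proof.
  intros Hl Hj.
  enough (lambda_lt l j + lambda_lt j l + lambda_odd (l + j) = lambda_odd l * lambda_odd j)
    by lra.
  apply (is_series_eq (antidiag (lambda_prod_term l j))); [|apply is_series_lambda_prod; auto].
  apply (is_series_ext (fun n => antidiag (lambda_lt_term l j) n
                                  + antidiag (fun b a => lambda_lt_term j l a b) n
                                  + antidiag (lambda_eq_term l j) n)).
  - intro n; unfold antidiag; rewrite <- !sum_n_m_Rplus; apply sum_n_m_ext; intro a.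
    unfold lambda_lt_term, lambda_eq_term, lambda_prod_term.
    destruct (Nat.ltb_spec a (n - a)), (Nat.ltb_spec (n - a) a), (Nat.eqb_spec a (n - a));
      try lia; ring_R.
  - apply is_series_Rplus; [apply is_series_Rplus|apply is_series_lambda_eq; lia].
    + apply is_series_lambda_lt; auto.
    + apply (is_series_ext (antidiag (lambda_lt_term j l))); [intro; apply antidiag_swap|].
      apply is_series_lambda_lt; auto.
Qed.

(** * The mixed double series *)

Lemma sum_inv_pow_geometric (x y : R) K :
  0 < x -> 0 < y -> x <> y -> (1 <= K)%nat ->
  sum_n_m (fun i => / x ^ (K + 1 - i) * / y ^ i) 1 K = (/ x ^ K - / y ^ K) / (y - x).
Proof.
  intros Hx Hy Hxy HK; induction HK.
  - rewrite sum_n_n; simpl; field; repeat split; lra.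
  - rewrite sum_n_m_Sm by lia.
    rewrite (sum_n_m_ext_loc _ (fun i => / x * (/ x ^ (m + 1 - i) * / y ^ i))).
    + rewrite sum_n_m_Rmult_l, IHHK.
      replace (S m + 1 - S m)%nat with 1%nat by lia; simpl.
      field; repeat split; try apply pow_nonzero; lra.
    + intros i Hi; replace (S m + 1 - i)%nat with (S (m + 1 - i)) by lia; simpl.
      field; repeat split; try apply pow_nonzero; lra.
Qed.

Lemma sum_inv_pow_geometric_inner (x y : R) K :
  0 < x -> 0 < y -> x <> y -> (2 <= K)%nat ->
  sum_n_m (fun i => / x ^ (K + 1 - i) * / y ^ i) 2 (K - 1)
  = / x ^ K * (/ (y - x) - / y) - / y ^ K * (/ (y - x) + / x).
Proof.
  intros Hx Hy Hxy HK.
  pose proof (sum_inv_pow_geometric x y K Hx Hy Hxy ltac:(lia)) as G.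
  destruct K as [|K]; [lia|].
  rewrite sum_n_m_Sn, (sum_n_m_Sm _ 2 K) in G by lia.
  replace (S K - 1)%nat with K by lia.
  replace (S K + 1 - 1)%nat with (S K) in G by lia.
  replace (S K + 1 - S K)%nat with 1%nat in G by lia.
  assert (x ^ S K <> 0) by (apply pow_nonzero; lra).
  assert (y ^ S K <> 0) by (apply pow_nonzero; lra).
  revert G; generalize (sum_n_m (fun i => / x ^ (S K + 1 - i) * / y ^ i) 2 K : R).
  intros s G; apply Rmult_eq_reg_r with (y - x); [|lra].
  replace s with ((/ x ^ S K - / y ^ S K) / (y - x) - / x ^ S K * / y ^ 1 - / x ^ 1 * / y ^ S K)
    by lra.
  field; repeat split; lra.
Qed.

Definition mixed_term (K a b : nat) : R :=
  / oddR a ^ K * (/ oddR b - / INR (2 * a + 2 * b + 2)).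
Definition row_part (K a b : nat) : R := / oddR a ^ K * row_kernel a b.
Definition column_part (K a b : nat) : R :=
  if (a <? b)%nat then / oddR b ^ K * (/ INR (2 * (b - a)) + / oddR a) else 0.

Lemma oddR_sub a b : (a < b)%nat -> oddR b - oddR a = INR (2 * (b - a)).
Proof.
  intros Hab; unfold oddR.
  replace (2 * b + 1)%nat with (2 * (b - a) + (2 * a + 1))%nat by lia.
  rewrite plus_INR; ring.
Qed.

Lemma mixed_term_add_lambda_lt_terms K a b :
  (2 <= K)%nat ->
  mixed_term K a b + sum_n_m (fun i => lambda_lt_term (K + 1 - i) i a b) 2 (K - 1)
  = row_part K a b - column_part K a b.
Proof.
  intros HK; unfold mixed_term, row_part, column_part, row_kernel, lambda_lt_term.
  destruct (Nat.ltb_spec a b) as [Hab|Hab].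
  - unfold lambda_prod_term; rewrite sum_inv_pow_geometric_inner; auto using oddR_pos.
    + rewrite oddR_sub by auto; unfold oddR at 2 4; ring.
    + pose proof (oddR_sub a b Hab) as Hsub.
      assert (0 < INR (2 * (b - a))) by (apply lt_0_INR; lia); lra.
  - rewrite sum_n_m_eq0 by auto; ring.
Qed.

Lemma row_part_nonneg K a b : 0 <= row_part K a b.
Proof.
  unfold row_part; pose proof (inv_oddR_pow_pos a K); pose proof (row_kernel_nonneg a b).
  nra.
Qed.

Lemma column_part_nonneg K a b : 0 <= column_part K a b.
Proof.
  unfold column_part; destruct (Nat.ltb_spec a b); [|lra].
  pose proof (inv_oddR_pow_pos b K).
  assert (0 < / INR (2 * (b - a))) by (apply Rinv_0_lt_compat, lt_0_INR; lia).
  pose proof (Rinv_0_lt_compat _ (oddR_pos a)); nra.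
Qed.

Lemma is_series_column_part K b :
  is_series (fun a => column_part K a b) (/ oddR b ^ K * (harm_odd b + harm_even b - / oddR b)).
Proof.
  replace (/ oddR b ^ K * (harm_odd b + harm_even b - / oddR b))
    with (sum_n_m (fun a => column_part K a b) 0 b).
  { apply is_series_finite_support; intros a Hba.
    unfold column_part; destruct (Nat.ltb_spec a b); [lia|reflexivity]. }
  destruct b.
  - rewrite sum_n_n; unfold column_part, harm_odd; simpl.
    rewrite sum_n_n, harm_even_0; ring.
  - rewrite sum_n_m_Sm by lia; unfold column_part at 2; rewrite Nat.ltb_irrefl.
    rewrite (sum_n_m_ext_loc _ (fun a => / oddR (S b) ^ K * (/ INR (2 * (S b - a)) + / oddR a)))
      by (intros a Ha; unfold column_part; destruct (Nat.ltb_spec a (S b)); [reflexivity|lia]).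
    rewrite sum_n_m_Rmult_l, sum_n_m_Rplus, sum_n_m_rev.
    rewrite (sum_n_m_ext_loc _ (fun i => / INR (2 * S i))) by (intros; do 3 f_equal; lia).
    unfold harm_odd, harm_even; rewrite <- (sum_n_m_S (fun e => / INR (2 * e)) 0 b).
    rewrite (sum_n_m_Sm _ 0 b) by lia.
    ring_R.
Qed.

Lemma inv_oddR_pow_mul a K : (1 <= K)%nat -> / oddR a ^ K * oddR a = / oddR a ^ (K - 1).
Proof.
  intros HK; rewrite (pow_split (oddR a) 1 K) by lia; pose proof (oddR_pos a).
  assert (oddR a ^ (K - 1) <> 0) by (apply pow_nonzero; lra).
  simpl; field; lra.
Qed.

Lemma ex_series_inv_oddR_pow_mul (h : nat -> R) K :
  (3 <= K)%nat -> (forall a, 0 <= h a <= oddR a) -> ex_series (fun a => / oddR a ^ K * h a).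
Proof.
  intros HK Hh; apply (ex_series_le_inv_sq _ 1); intro a; rewrite Rmult_1_l.
  pose proof (inv_oddR_pow_pos a K); specialize (Hh a).
  split; [nra|].
  apply Rle_trans with (/ oddR a ^ K * oddR a); [nra|].
  rewrite inv_oddR_pow_mul by lia; apply inv_pow_le_inv_sq; [apply oddR_ge_S|lia].
Qed.

(* The rows of [row_part] and the columns of [column_part] are summed in closed form;
   the harmonic parts cancel and leave [1 / oddR a ^ (K + 1)]. *)
Lemma is_series_row_sub_column K :
  (3 <= K)%nat ->
  is_series (fun n => antidiag (row_part K) n - antidiag (column_part K) n) (lambda_odd (K + 1)).
Proof.
  intros HK.
  set (r1 := fun a => / oddR a ^ K * (harm_odd a + harm_even a)).
  set (r2 := fun b => / oddR b ^ K * (harm_odd b + harm_even b - / oddR b)).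
  assert (harm_bounds : forall a, 0 < / oddR a <= harm_odd a /\ 0 <= harm_even a
                                  /\ harm_odd a + harm_even a <= oddR a).
  { intro a; repeat split; auto using harm_even_nonneg, inv_oddR_le_harm_odd, harm_le_oddR.
    apply Rinv_0_lt_compat, oddR_pos. }
  assert (E1 : ex_series r1)
    by (apply ex_series_inv_oddR_pow_mul; auto; intro a; pose proof (harm_bounds a); lra).
  assert (E2 : ex_series r2)
    by (apply ex_series_inv_oddR_pow_mul; auto; intro a; pose proof (harm_bounds a); lra).
  replace (lambda_odd (K + 1)) with (Series r1 - Series r2).
  - apply is_series_Rminus.
    + apply (is_series_antidiag _ r1); auto using row_part_nonneg, Series_correct.
      intro a; apply is_series_scal_Rmult, is_series_row_kernel.
    + apply (is_series_ext (antidiag (fun b a => column_part K a b)));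
        [intro; rewrite <- antidiag_swap; reflexivity|].
      apply (is_series_antidiag _ r2); auto using column_part_nonneg, Series_correct.
      intro b; apply is_series_column_part.
  - apply (is_series_eq (fun a => r1 a - r2 a));
      [apply is_series_Rminus; apply Series_correct; auto|].
    apply (is_series_ext (fun a => / oddR a ^ (K + 1))); [|apply is_series_lambda_odd; lia].
    intro a; unfold r1, r2; rewrite pow_add; pose proof (oddR_pos a).
    assert (oddR a ^ K <> 0) by (apply pow_nonzero; lra).
    simpl; field; lra.
Qed.

Lemma is_series_mixed K :
  (3 <= K)%nat ->
  is_series (antidiag (mixed_term K))
    (lambda_odd (K + 1) - sum_n_m (fun i => lambda_lt (K + 1 - i) i) 2 (K - 1)).
Proof.
  intros HK.
  assert (HU : is_series
                 (fun n => sum_n_m (fun i => antidiag (lambda_lt_term (K + 1 - i) i) n) 2 (K - 1))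
                 (sum_n_m (fun i => lambda_lt (K + 1 - i) i) 2 (K - 1)))
    by (apply (is_series_sum_n_m (fun i => antidiag (lambda_lt_term (K + 1 - i) i)));
        intros; apply is_series_lambda_lt; lia).
  refine (is_series_ext _ _ _ _ (is_series_Rminus _ _ _ _ (is_series_row_sub_column K HK) HU)).
  intro n; unfold antidiag.
  rewrite (sum_n_m_swap (fun i a => lambda_lt_term (K + 1 - i) i a (n - a)%nat)).
  rewrite <- !sum_n_m_Rminus; apply sum_n_m_ext; intro a.
  rewrite <- mixed_term_add_lambda_lt_terms by lia; ring_R.
Qed.

Lemma sum_lambda_lt_pairs k :
  (2 <= k)%nat ->
  sum_n_m (fun i => lambda_lt (2 * k + 1 - i) i) 2 (2 * k - 1)
  = sum_n_m (fun j => lambda_odd (2 * j) * lambda_odd (2 * k + 1 - 2 * j)) 1 (k - 1)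
    - INR (k - 1) * lambda_odd (2 * k + 1).
Proof.
  intros Hk; rewrite sum_n_m_pairs, sum_n_m_Rplus by lia.
  rewrite (sum_n_m_rev_1 (fun j => lambda_lt (2 * k + 1 - (2 * j + 1)) (2 * j + 1))).
  rewrite <- sum_n_m_Rplus.
  rewrite (sum_n_m_ext_loc _ (fun j => lambda_odd (2 * j) * lambda_odd (2 * k + 1 - 2 * j)
                                      - lambda_odd (2 * k + 1))).
  - rewrite sum_n_m_Rminus, sum_n_m_const.
    replace (S (k - 1) - 1)%nat with (k - 1)%nat by lia; ring_R.
  - intros j Hj.
    replace (2 * k + 1 - (2 * (k - j) + 1))%nat with (2 * j)%nat by lia.
    replace (2 * (k - j) + 1)%nat with (2 * k + 1 - 2 * j)%nat by lia.
    rewrite lambda_lt_add_swap by lia.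
    replace (2 * k + 1 - 2 * j + 2 * j)%nat with (2 * k + 1)%nat by lia; ring_R.
Qed.

Lemma is_series_mixed_even k :
  (2 <= k)%nat ->
  is_series (antidiag (mixed_term (2 * k)))
    (INR k * lambda_odd (2 * k + 1)
     - sum_n_m (fun j => lambda_odd (2 * j) * lambda_odd (2 * k + 1 - 2 * j)) 1 (k - 1)).
Proof.
  intros Hk; pose proof (is_series_mixed (2 * k) ltac:(lia)) as H.
  rewrite sum_lambda_lt_pairs, minus_INR in H by lia.
  match type of H with is_series _ ?l => replace (INR k * _ - _) with l; [exact H|] end.
  change (INR 1) with 1; ring_R.
Qed.

Definition sigma_term (s t a b : nat) : R := / (INR (2 * a + 2 * b + 2) ^ s * oddR a ^ t).

Lemma Sodd_S n t : Sodd (S n) t = sum_n_m (fun a => / oddR a ^ t) 0 n.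
Proof.
  unfold Sodd; rewrite <- sum_n_m_S; apply sum_n_m_ext; intro a.
  unfold oddR; do 3 f_equal; lia.
Qed.

Lemma is_series_sigma_st s t :
  (2 <= s)%nat -> (2 <= t)%nat ->
  is_series (fun n => Sodd (S n) t / INR (S n) ^ s) (sigma_st s t).
Proof.
  intros Hs Ht; apply Series_correct, (ex_series_le_inv_sq _ (lambda_odd t)); intro n.
  assert (0 <= Sodd (S n) t <= lambda_odd t).
  { rewrite Sodd_S; split.
    - apply sum_n_m_nonneg; intro; left; apply inv_oddR_pow_pos.
    - apply is_series_partial_le; [intro; left; apply inv_oddR_pow_pos|].
      apply is_series_lambda_odd, Ht. }
  pose proof (inv_pow_le_inv_sq (INR (S n)) n s (Rle_refl _) Hs).
  unfold Rdiv; split; nra.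
Qed.

Lemma antidiag_sigma_term s t n :
  antidiag (sigma_term s t) n = / 2 ^ s * (Sodd (S n) t / INR (S n) ^ s).
Proof.
  unfold antidiag, sigma_term.
  rewrite (sum_n_m_ext_loc _ (fun a => / INR (2 * n + 2) ^ s * / oddR a ^ t))
    by (intros a Ha; rewrite Rinv_mult; do 4 f_equal; lia).
  rewrite sum_n_m_Rmult_l, <- Sodd_S.
  replace (INR (2 * n + 2)) with (2 * INR (S n))
    by (rewrite S_INR, plus_INR, mult_INR; simpl; ring).
  unfold Rdiv; rewrite Rpow_mult_distr, Rinv_mult; ring.
Qed.

Lemma is_series_antidiag_sigma_term s t :
  (2 <= s)%nat -> (2 <= t)%nat ->
  is_series (antidiag (sigma_term s t)) (/ 2 ^ s * sigma_st s t).
Proof.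
  intros Hs Ht.
  apply (is_series_ext (fun n => / 2 ^ s * (Sodd (S n) t / INR (S n) ^ s)));
    [intro; rewrite antidiag_sigma_term; reflexivity|].
  apply is_series_scal_Rmult, is_series_sigma_st; auto.
Qed.

Lemma inv_opp_pow_mul (y x : R) e : / ((- y) ^ e * x) = (-1) ^ e * / (y ^ e * x).
Proof.
  replace (- y) with (-1 * y) by ring.
  rewrite Rpow_mult_distr, Rmult_assoc, Rinv_mult, <- pow_inv.
  replace (/ -1) with (-1) by field; reflexivity.
Qed.

Lemma pow_m1_sub_even n j : (j <= 2 * n)%nat -> (-1) ^ (2 * n - j) = (-1) ^ j.
Proof.
  intros Hj.
  assert (Hsq : (-1) ^ j * (-1) ^ j = 1)
    by (rewrite <- pow_add; replace (j + j)%nat with (2 * j)%nat by lia; apply pow_1_even).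
  assert (Hprod : (-1) ^ (2 * n - j) * (-1) ^ j = 1)
    by (rewrite <- pow_add; replace (2 * n - j + j)%nat with (2 * n)%nat by lia;
        apply pow_1_even).
  transitivity ((-1) ^ (2 * n - j) * (-1) ^ j * (-1) ^ j);
    [rewrite Rmult_assoc, Hsq | rewrite Hprod]; ring.
Qed.

Lemma oddR_add a b : INR (2 * a + 2 * b + 2) = oddR a + oddR b.
Proof. unfold oddR; rewrite <- plus_INR; f_equal; lia. Qed.

(* The partial fraction decomposition with respect to [N = 2a + 2b + 2] and [- (2b + 1)],
   whose sum is [2a + 1]. *)
Lemma sigma_term_partial_fraction v r a b :
  (1 <= r)%nat ->
  sigma_term (2 * v + 1) (2 * r) b a
  = sum_n_m (fun i => Binomial.C (2 * r - 1 + i) i * sigma_term (2 * v + 1 - i) (2 * r + i) a b)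
      0 (2 * v)
  + sum_n_m (fun j => (-1) ^ j * Binomial.C (2 * v + j) j
                      * lambda_prod_term (2 * v + 1 + j) (2 * r - j) a b) 0 (2 * r - 1).
Proof.
  intros Hr; unfold sigma_term, lambda_prod_term.
  pose proof (oddR_add a b) as HN; pose proof (oddR_pos a) as Hm; pose proof (oddR_pos b) as Hm'.
  set (N := INR (2 * a + 2 * b + 2)) in *; set (m := oddR a) in *; set (m' := oddR b) in *.
  replace (INR (2 * b + 2 * a + 2)) with N by (unfold N; f_equal; lia).
  pose proof (partial_fraction_pow N (- m') (2 * v) (2 * r - 1) ltac:(lra) ltac:(lra) ltac:(lra))
    as Hpf.
  replace (N + - m') with m in Hpf by lra.
  replace (S (2 * r - 1)) with (2 * r)%nat in Hpf by lia.
  replace (S (2 * v)) with (2 * v + 1)%nat in Hpf by lia.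
  replace ((- m') ^ (2 * r)) with (m' ^ (2 * r)) in Hpf
    by (replace (- m') with (-1 * m') by ring; rewrite Rpow_mult_distr, pow_1_even; ring).
  rewrite Hpf; f_equal; apply sum_n_m_ext_loc; intros k Hk.
  rewrite inv_opp_pow_mul, pow_m1_sub_even, Rinv_mult by lia; ring_R.
Qed.

(* The terms [i = 0], [i = 2v] and [j = 2r - 1] are split off: the first is the
   symmetric partner on the left, the other two combine into the mixed term. *)
Lemma sigma_term_antisym_decomposition v r a b :
  (1 <= v)%nat -> (1 <= r)%nat ->
  sigma_term (2 * v + 1) (2 * r) b a - sigma_term (2 * v + 1) (2 * r) a b
  = sum_n_m (fun i => Binomial.C (2 * r + i - 1) i * sigma_term (2 * v + 1 - i) (2 * r + i) a b)
      1 (2 * v - 1)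
  + sum_n_m (fun j => (-1) ^ j * Binomial.C (2 * v + j) j
                      * lambda_prod_term (2 * v + 1 + j) (2 * r - j) a b) 0 (2 * r - 2)
  - Binomial.C (2 * v + 2 * r - 1) (2 * v) * mixed_term (2 * v + 2 * r) a b.
Proof.
  intros Hv Hr; rewrite sigma_term_partial_fraction by lia.
  rewrite (sum_n_m_Sn _ 0 (2 * v)), (sum_n_m_last _ 1 (2 * v)), (sum_n_m_last _ 0 (2 * r - 1))
    by lia.
  replace (2 * r - 1 - 1)%nat with (2 * r - 2)%nat by lia.
  rewrite (sum_n_m_ext_loc (fun i => Binomial.C (2 * r - 1 + i) i * _)
             (fun i => Binomial.C (2 * r + i - 1) i * sigma_term (2 * v + 1 - i) (2 * r + i) a b))
    by (intros k _; replace (2 * r - 1 + k)%nat with (2 * r + k - 1)%nat by lia; reflexivity).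
  rewrite C_n_0, Nat.add_0_r, Nat.sub_0_r.
  set (c := Binomial.C (2 * v + 2 * r - 1) (2 * v)); set (K := (2 * v + 2 * r)%nat).
  set (top_sigma := Binomial.C (2 * r - 1 + 2 * v) (2 * v)
                    * sigma_term (2 * v + 1 - 2 * v) (2 * r + 2 * v) a b).
  set (top_lambda := (-1) ^ (2 * r - 1) * Binomial.C (2 * v + (2 * r - 1)) (2 * r - 1)
                     * lambda_prod_term (2 * v + 1 + (2 * r - 1)) (2 * r - (2 * r - 1)) a b).
  assert (Hends : c * mixed_term K a b = - (top_sigma + top_lambda)).
  { unfold top_sigma, top_lambda.
    replace (2 * r - 1)%nat with (S (2 * (r - 1))) by lia.
    rewrite pow_1_odd, (pascal_step1 (2 * v + S (2 * (r - 1)))) by lia.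
    replace (2 * v + S (2 * (r - 1)) - S (2 * (r - 1)))%nat with (2 * v)%nat by lia.
    replace (S (2 * (r - 1)) + 2 * v)%nat with (2 * v + 2 * r - 1)%nat by lia.
    replace (2 * v + S (2 * (r - 1)))%nat with (2 * v + 2 * r - 1)%nat by lia.
    replace (2 * v + 1 - 2 * v)%nat with 1%nat by lia.
    replace (2 * r - S (2 * (r - 1)))%nat with 1%nat by lia.
    replace (2 * v + 1 + S (2 * (r - 1)))%nat with K by (unfold K; lia).
    replace (2 * r + 2 * v)%nat with K by (unfold K; lia).
    unfold sigma_term, mixed_term, lambda_prod_term, c; rewrite oddR_add.
    pose proof (oddR_pos a); pose proof (oddR_pos b).
    assert (oddR a ^ K <> 0) by (apply pow_nonzero; lra).
    field; lra. }
  rewrite Hends; ring_R.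
Qed.

Lemma antidiag_antisym (h : nat -> nat -> R) n : antidiag (fun a b => h b a - h a b) n = 0.
Proof.
  unfold antidiag; rewrite sum_n_m_Rminus, (sum_n_m_rev (fun a => h (n - a)%nat a)).
  rewrite (sum_n_m_ext_loc (fun i => h (n - (n - i))%nat (n - i)%nat) (fun a => h a (n - a)%nat))
    by (intros; f_equal; lia).
  ring_R.
Qed.

Lemma antidiag_sum_n_m (F : nat -> nat -> nat -> R) (c : nat -> R) p q n :
  antidiag (fun a b => sum_n_m (fun i => c i * F i a b) p q) n
  = sum_n_m (fun i => c i * antidiag (F i) n) p q.
Proof.
  unfold antidiag; rewrite <- sum_n_m_swap; apply sum_n_m_ext; intro i.
  apply sum_n_m_Rmult_l.
Qed.

Lemma sigma_lambda_relation v r :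
  (1 <= v)%nat -> (1 <= r)%nat ->
  sum_n_m (fun i => Binomial.C (2 * r + i - 1) i
                    * (/ 2 ^ (2 * v + 1 - i) * sigma_st (2 * v + 1 - i) (2 * r + i)))
    1 (2 * v - 1)
  + sum_n_m (fun j => (-1) ^ j * Binomial.C (2 * v + j) j
                      * (lambda_odd (2 * v + 1 + j) * lambda_odd (2 * r - j)))
      0 (2 * r - 2)
  - Binomial.C (2 * v + 2 * r - 1) (2 * v)
    * (INR (v + r) * lambda_odd (2 * (v + r) + 1)
       - sum_n_m (fun j => lambda_odd (2 * j) * lambda_odd (2 * (v + r) + 1 - 2 * j))
           1 (v + r - 1))
  = 0.
Proof.
  intros Hv Hr.
  set (c := Binomial.C (2 * v + 2 * r - 1) (2 * v)).
  set (ci := fun i => Binomial.C (2 * r + i - 1) i).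
  set (cj := fun j => (-1) ^ j * Binomial.C (2 * v + j) j).
  set (sigma_parts := fun i n => ci i * antidiag (sigma_term (2 * v + 1 - i) (2 * r + i)) n).
  set (lambda_parts := fun j n => cj j * antidiag (lambda_prod_term (2 * v + 1 + j) (2 * r - j)) n).
  apply (is_series_eq (fun n => sum_n_m (fun i => sigma_parts i n) 1 (2 * v - 1)
                                + sum_n_m (fun j => lambda_parts j n) 0 (2 * r - 2)
                                - c * antidiag (mixed_term (2 * v + 2 * r)) n)).
  - apply is_series_Rminus; [apply is_series_Rplus|].
    + apply (is_series_sum_n_m sigma_parts); intros i Hi.
      apply is_series_scal_Rmult, is_series_antidiag_sigma_term; lia.
    + apply (is_series_sum_n_m lambda_parts); intros j Hj.
      apply is_series_scal_Rmult, is_series_lambda_prod; lia.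
    + apply is_series_scal_Rmult; replace (2 * v + 2 * r)%nat with (2 * (v + r))%nat by lia.
      apply is_series_mixed_even; lia.
  - apply (is_series_ext (fun _ => 0)); [|apply is_series_R0].
    intro n; rewrite <- (antidiag_antisym (sigma_term (2 * v + 1) (2 * r)) n).
    unfold sigma_parts, lambda_parts; rewrite <- !antidiag_sum_n_m; unfold antidiag.
    rewrite <- sum_n_m_Rmult_l, <- sum_n_m_Rplus, <- sum_n_m_Rminus.
    apply sum_n_m_ext; intro a; rewrite sigma_term_antisym_decomposition by lia; reflexivity.
Qed.

Theorem mainTheorem13 (v r : nat) (hv : (1 <= v)%nat) (hr : (1 <= r)%nat) :
  sum_n_m (fun i : nat =>
      2 ^ (i - 1)%nat * binom (2 * r + i - 1)%nat i
        * sigma_st (2 * v + 1 - i)%nat (2 * r + i)%nat)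
    1 (2 * v - 1)%nat
  + 2 ^ (2 * v)%nat * sum_n_m (fun j : nat =>
      (-1) ^ j * binom (2 * v + j)%nat j * lambda_odd (2 * v + 1 + j)%nat
        * lambda_odd (2 * r - j)%nat)
    0 (2 * r - 2)%nat
  - 2 ^ (2 * v)%nat * binom (2 * v + 2 * r - 1)%nat (2 * v)%nat * INR (v + r)
      * lambda_odd (2 * v + 2 * r + 1)%nat
  + 2 ^ (2 * v)%nat * binom (2 * v + 2 * r - 1)%nat (2 * v)%nat
      * sum_n_m (fun j : nat =>
          lambda_odd (2 * j)%nat * lambda_odd (2 * r + 2 * v - 2 * j + 1)%nat)
          1 (r + v - 1)%nat
  = 0.
Proof.
  pose proof (sigma_lambda_relation v r hv hr) as H.
  apply (f_equal (Rmult (2 ^ (2 * v)))) in H; rewrite Rmult_0_r in H.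
  etransitivity; [|exact H].
  unfold binom.
  rewrite (sum_n_m_ext_loc (fun i => 2 ^ (i - 1) * _ * _)
             (fun i => 2 ^ (2 * v) * (Binomial.C (2 * r + i - 1) i
                         * (/ 2 ^ (2 * v + 1 - i) * sigma_st (2 * v + 1 - i) (2 * r + i)))))
    by (intros i Hi; rewrite (pow_split 2 (i - 1) (2 * v)) by lia;
        replace (2 * v - (i - 1))%nat with (2 * v + 1 - i)%nat by lia;
        R_eq; field; apply pow_nonzero; lra).
  rewrite (sum_n_m_ext (fun j => (-1) ^ j * Binomial.C (2 * v + j) j * lambda_odd (2 * v + 1 + j)
                                 * lambda_odd (2 * r - j))
             (fun j => (-1) ^ j * Binomial.C (2 * v + j) j
                       * (lambda_odd (2 * v + 1 + j) * lambda_odd (2 * r - j))))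
    by (intro; ring_R).
  rewrite (sum_n_m_ext_loc (fun j => lambda_odd (2 * j) * lambda_odd (2 * r + 2 * v - 2 * j + 1))
             (fun j => lambda_odd (2 * j) * lambda_odd (2 * (v + r) + 1 - 2 * j)))
    by (intros; do 2 f_equal; lia).
  rewrite sum_n_m_Rmult_l.
  replace (r + v - 1)%nat with (v + r - 1)%nat by lia.
  replace (2 * v + 2 * r + 1)%nat with (2 * (v + r) + 1)%nat by lia.
  ring_R.
Qed.
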